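(* Assume Assumption A. Let $\mathbb B^s=\{(\eta,\xi):\eta\ne\xi,\ (\eta,\xi)\in\mathbb B\text{ or }(\xi,\eta)\in\mathbb B\}$ and $c^s_N(\eta,\xi)=\tfrac12\{\mu_N(\eta)R_N(\eta,\xi)+\mu_N(\xi)R_N(\xi,\eta)\}$. Then the family of sequences $(c^s_N(\eta,\xi))_{N\ge1}$, $(\eta,\xi)\in\mathbb B^s$, is ordered.
   Context: Setting: $E$ is a fixed finite set; for each $N\ge1$, $(\eta^N_t)$ is a continuous-time irreducible Markov chain on $E$ with jump rates $R_N(\eta,\xi)$ and unique invariant probability measure $\mu_N$. Ordered families: a finite family of sequences of positive reals $(a^r_N)_{N\ge1}$, $r\in\mathfrak R$, is ordered if for all $r\neq s$ the sequence $\arctan(a^r_N/a^s_N)$ converges as $N\to\infty$. Assumption A: (i) for each $\eta\neq\xi$, either $R_N(\eta,\xi)=0$ for all $N$ or $R_N(\eta,\xi)>0$ for all $N$; let $\mathbb B=\{(\eta,\xi):\eta\ne\xi,R_N(\eta,\xi)>0\}$. (ii) For every $m\ge1$ the family $\prod_{(\eta,\xi)\in\mathbb B}R_N(\eta,\xi)^{k(\eta,\xi)}$, indexed by $k:\mathbb B\to\mathbb Z_+$ with $\sum k=m$, is ordered. *)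

From mathcomp Require Import all_boot.
From Stdlib Require Import Reals Relations.
Set Implicit Arguments. Unset Strict Implicit. Unset Printing Implicit Defensive.
Local Open Scope R_scope.

(* Sequences (a_N)_{N>=1} are represented as functions nat -> R,
   with index n standing for N = n+1. *)

Definition ordered_family (I : Type) (P : I -> Prop) (a : I -> nat -> R) : Prop :=
  (forall r, P r -> forall N, 0 < a r N) /\
  (forall r s, P r -> P s -> r <> s ->
     exists l, Un_cv (fun N => atan (a r N / a s N)) l).

Definition irreducible (E : finType) (Rt : E -> E -> R) : Prop :=
  forall x y : E, clos_refl_trans E (fun a b => a <> b /\ 0 < Rt a b) x y.

Definition rates (E : finType) (Rt : E -> E -> R) : Prop :=
  forall x y : E, x <> y -> 0 <= Rt x y.

Definition invariant_prob (E : finType) (Rt : E -> E -> R) (mu : E -> R) : Prop :=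
  (forall x, 0 <= mu x) /\
  \big[Rplus/0]_(x : E) mu x = 1 /\
  (forall y : E,
     \big[Rplus/0]_(x : E | x != y) (mu x * Rt x y)
     = mu y * \big[Rplus/0]_(z : E | z != y) Rt y z).

Definition bond (E : finType) (Rt : nat -> E -> E -> R) (x y : E) : Prop :=
  x <> y /\ forall N, 0 < Rt N x y.

Definition assumptionA1 (E : finType) (Rt : nat -> E -> E -> R) : Prop :=
  forall x y : E, x <> y ->
    (forall N, Rt N x y = 0) \/ (forall N, 0 < Rt N x y).

(* Exponent vectors k : B -> Z_+ with sum m (k extended by 0 outside B). *)
Definition exponent (E : finType) (Rt : nat -> E -> E -> R) (m : nat)
  (k : E -> E -> nat) : Prop :=
  (forall x y, k x y <> 0%nat -> bond Rt x y) /\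
  (\sum_(p : E * E | p.1 != p.2) k p.1 p.2)%N = m.

Definition monomial (E : finType) (Rt : nat -> E -> E -> R)
  (k : E -> E -> nat) (N : nat) : R :=
  \big[Rmult/1]_(p : E * E | p.1 != p.2) (Rt N p.1 p.2 ^ k p.1 p.2).

Definition assumptionA2 (E : finType) (Rt : nat -> E -> E -> R) : Prop :=
  forall m : nat, (1 <= m)%nat ->
    ordered_family (exponent Rt m) (monomial Rt).

Definition sym_bond (E : finType) (Rt : nat -> E -> E -> R) (p : E * E) : Prop :=
  p.1 <> p.2 /\ (bond Rt p.1 p.2 \/ bond Rt p.2 p.1).

Definition cs (E : finType) (Rt : nat -> E -> E -> R) (mu : nat -> E -> R)
  (p : E * E) (N : nat) : R :=
  / 2 * (mu N p.1 * Rt N p.1 p.2 + mu N p.2 * Rt N p.2 p.1).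

From HB Require Import structures.
From mathcomp Require Import all_boot zify.
From Stdlib Require Import Reals Lra Classical.
From Stdlib Require List.

(* Under Assumption A(ii), of two monomials of the same positive degree in the rates one
   dominates the other (their ratio converges), so every finite set of such monomials has a
   dominant element.  Dividing two polynomials with positive coefficients, homogeneous of the
   same degree, by the dominant monomial among their terms, both quotients converge and one
   limit is positive; hence the arctangent of their ratio converges.  By Assumption A(i) every
   rate is either zero or a monomial of degree 1.  Eliminating the states one at a time
   (passing to the trace of the chain on the remaining states) writes the invariant measure as
   a ratio of such polynomials of degree difference 0, so every conductance c^s_N is a ratio of
   degree difference 1, and any two of them have a convergent arctangent ratio. *)

Set Implicit Arguments.
Unset Strict Implicit.
Unset Printing Implicit Defensive.
Local Open Scope R_scope.

HB.instance Definition _ := Monoid.isComLaw.Build R 0 Rplus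
  (fun a b c => esym (Rplus_assoc a b c)) Rplus_comm Rplus_0_l.
HB.instance Definition _ := Monoid.isComLaw.Build R 1 Rmult
  (fun a b c => esym (Rmult_assoc a b c)) Rmult_comm Rmult_1_l.
HB.instance Definition _ := Monoid.isMulLaw.Build R 0 Rmult Rmult_0_l Rmult_0_r.
HB.instance Definition _ := Monoid.isAddLaw.Build R Rmult Rplus
  Rmult_plus_distr_r Rmult_plus_distr_l.

Lemma sumR_ge0 (I : Type) (s : seq I) (P : pred I) (F : I -> R) :
  (forall i, P i -> 0 <= F i) -> 0 <= \big[Rplus/0]_(i <- s | P i) F i.
Proof. by move=> F_ge0; apply: big_ind => //; [lra | move=> a b; lra]. Qed.

Lemma sumR_ge_term (I : finType) (P : pred I) (F : I -> R) j :
  (forall i, P i -> 0 <= F i) -> P j -> F j <= \big[Rplus/0]_(i | P i) F i.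
Proof.
move=> F_ge0 Pj; rewrite (bigD1 j) //=.
suff : 0 <= \big[Rplus/0]_(i | P i && (i != j)) F i by lra.
by apply: sumR_ge0 => i /andP[Pi _]; apply: F_ge0.
Qed.

Lemma ratio_num_gt0 a b : 0 < b -> 0 < a / b -> 0 < a.
Proof.
move=> b_gt0 ab_gt0; have -> : a = a / b * b by field; apply: Rgt_not_eq.
exact: Rmult_lt_0_compat.
Qed.

Lemma Un_cv_const c : Un_cv (fun _ => c) c.
Proof. move=> e e_gt0; exists 0%nat => n _; rewrite /Rdist Rminus_diag Rabs_R0; lra. Qed.

Lemma Un_cv_ext (u v : nat -> R) l : (forall N, u N = v N) -> Un_cv u l -> Un_cv v l.
Proof.
move=> uv cv_u e e_gt0; have [N0 cv_N0] := cv_u e e_gt0.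
by exists N0 => n n_ge; rewrite -uv; apply: cv_N0.
Qed.

Lemma Un_cv_ge0 (u : nat -> R) l : (forall N, 0 <= u N) -> Un_cv u l -> 0 <= l.
Proof. move=> u_ge0; exact: Rle_cv_lim u_ge0 (Un_cv_const 0). Qed.

Lemma Un_cv_le (u : nat -> R) l c : (forall N, u N <= c) -> Un_cv u l -> l <= c.
Proof. move=> u_le cv_u; exact: Rle_cv_lim u_le cv_u (Un_cv_const c). Qed.

Section RatioLimits.

Context {a b : nat -> R}.
Hypotheses (a_gt0 : forall N, 0 < a N) (b_gt0 : forall N, 0 < b N).

Lemma atan_ratio_swap {l} :
  Un_cv (fun N => atan (b N / a N)) l -> Un_cv (fun N => atan (a N / b N)) (PI / 2 - l).
Proof.
move=> cv_ba; apply: Un_cv_ext (CV_minus _ _ _ _ (Un_cv_const (PI / 2)) cv_ba) => N.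
have -> : a N / b N = / (b N / a N) by field; split; apply: Rgt_not_eq.
by rewrite atan_inv //; apply: Rdiv_lt_0_compat.
Qed.

Lemma atan_ratio_limit_bounds {l} :
  Un_cv (fun N => atan (a N / b N)) l -> 0 <= l <= PI / 2.
Proof.
move=> cv_ab; split.
- apply: Un_cv_ge0 cv_ab => N; rewrite -atan_0.
  by apply/Rlt_le/atan_increasing/Rdiv_lt_0_compat.
- by apply: Un_cv_le cv_ab => N; have := atan_bound (a N / b N); lra.
Qed.

Lemma ratio_cv_of_atan {l} :
  Un_cv (fun N => atan (a N / b N)) l -> l < PI / 2 -> Un_cv (fun N => a N / b N) (tan l).
Proof.
move=> cv_ab l_lt; have := atan_ratio_limit_bounds cv_ab; have := PI_RGT_0 => PI_gt0 l_bd.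
apply: Un_cv_ext (continuity_seq tan _ _ _ cv_ab) => [N|]; first by rewrite tan_atan.
by apply/derivable_continuous_pt/derivable_pt_tan; lra.
Qed.

Lemma Un_cv_atan_ratio {d La Lb} : (forall N, 0 < d N) ->
  Un_cv (fun N => a N / d N) La -> Un_cv (fun N => b N / d N) Lb -> 0 < Lb ->
  Un_cv (fun N => atan (a N / b N)) (atan (La / Lb)).
Proof.
move=> d_gt0 cv_a cv_b Lb_gt0.
have cv_inv : Un_cv (fun N => / (b N / d N)) (/ Lb).
  apply: continuity_seq cv_b; apply: (continuity_pt_inv id); last exact: Rgt_not_eq.
  exact/derivable_continuous_pt/derivable_pt_id.
apply: Un_cv_ext (continuity_seq atan _ _ _ (CV_mult _ _ _ _ cv_a cv_inv)) => [N|].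
  by congr atan; field; split; apply: Rgt_not_eq.
exact/derivable_continuous_pt/derivable_pt_atan.
Qed.

End RatioLimits.

Definition ratio_cv (a b : nat -> R) := exists L, Un_cv (fun N => a N / b N) L.

Lemma ratio_cv_refl a : (forall N, 0 < a N) -> ratio_cv a a.
Proof.
move=> a_gt0; exists 1; apply: Un_cv_ext (Un_cv_const 1) => N.
by field; apply: Rgt_not_eq.
Qed.

Lemma ratio_cv_trans a b c : (forall N, 0 < b N) -> (forall N, 0 < c N) ->
  ratio_cv a b -> ratio_cv b c -> ratio_cv a c.
Proof.
move=> b_gt0 c_gt0 [L1 cv_ab] [L2 cv_bc]; exists (L1 * L2).
apply: Un_cv_ext (CV_mult _ _ _ _ cv_ab cv_bc) => N.
by field; split; apply: Rgt_not_eq.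
Qed.

Lemma ratio_cv_total a b l : (forall N, 0 < a N) -> (forall N, 0 < b N) ->
  Un_cv (fun N => atan (a N / b N)) l -> ratio_cv a b \/ ratio_cv b a.
Proof.
move=> a_gt0 b_gt0 cv_ab; have := PI_RGT_0 => PI_gt0.
have [_ l_le] := atan_ratio_limit_bounds a_gt0 b_gt0 cv_ab.
case: (Rle_lt_or_eq_dec _ _ l_le) => [l_lt | l_eq].
  by left; exists (tan l); apply: ratio_cv_of_atan.
right; exists (tan 0); apply: (ratio_cv_of_atan b_gt0 a_gt0); last lra.
have -> : 0 = PI / 2 - l by lra.
exact: atan_ratio_swap.
Qed.

Lemma atan_ratio_converges a b d La Lb :
  (forall N, 0 < a N) -> (forall N, 0 < b N) -> (forall N, 0 < d N) ->
  Un_cv (fun N => a N / d N) La -> Un_cv (fun N => b N / d N) Lb -> 0 < La \/ 0 < Lb ->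
  exists l, Un_cv (fun N => atan (a N / b N)) l.
Proof.
move=> a_gt0 b_gt0 d_gt0 cv_a cv_b; case: (Rlt_or_le 0 Lb) => [Lb_gt0 _ | Lb_le0 La_gt0].
  by exists (atan (La / Lb)); exact: (Un_cv_atan_ratio b_gt0 d_gt0 cv_a cv_b).
exists (PI / 2 - atan (Lb / La)); apply: atan_ratio_swap => //.
apply: (Un_cv_atan_ratio a_gt0 d_gt0 cv_b cv_a); lra.
Qed.

Section Polynomials.

Variables (E : finType) (Rt : nat -> E -> E -> R).

Definition add_exponent (k1 k2 : E -> E -> nat) : E -> E -> nat :=
  fun x y => (k1 x y + k2 x y)%nat.

Definition zero_exponent : E -> E -> nat := fun _ _ => 0%nat.

Definition unit_exponent (x y : E) : E -> E -> nat :=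
  fun a b => if (a == x) && (b == y) then 1%nat else 0%nat.

Lemma exponent_zero : exponent Rt 0 zero_exponent.
Proof. by split=> // ; rewrite big1. Qed.

Lemma exponentD m1 m2 k1 k2 :
  exponent Rt m1 k1 -> exponent Rt m2 k2 -> exponent Rt (m1 + m2) (add_exponent k1 k2).
Proof.
move=> [bond1 sum1] [bond2 sum2]; split; last by rewrite big_split /= sum1 sum2.
move=> x y; rewrite /add_exponent.
by case: (k1 x y) (bond1 x y) => [_ | n k1_bond _]; [apply: bond2 | apply: k1_bond].
Qed.

Lemma unit_exponent_other x y (p : E * E) : p != (x, y) -> unit_exponent x y p.1 p.2 = 0%nat.
Proof.
case: p => a b /=; rewrite /unit_exponent xpair_eqE.
by case: (a == x) (b == y) => [] [].
Qed.

Lemma exponent_unit x y : bond Rt x y -> exponent Rt 1 (unit_exponent x y).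
Proof.
move=> xy_bond; have xy : x != y by apply/eqP; case: xy_bond.
split=> [a b | ].
  by rewrite /unit_exponent; case: (eqVneq a x) (eqVneq b y) => [-> | //] [-> | //].
rewrite (bigD1 (x, y)) //= big1 => [|p /andP[_ p_xy]]; last exact: unit_exponent_other.
by rewrite /unit_exponent !eqxx.
Qed.

Lemma monomial_zero N : monomial Rt zero_exponent N = 1.
Proof. by rewrite /monomial big1. Qed.

Lemma monomialD k1 k2 N :
  monomial Rt (add_exponent k1 k2) N = monomial Rt k1 N * monomial Rt k2 N.
Proof. by rewrite /monomial -big_split; apply: eq_bigr => p _; rewrite pow_add. Qed.

Lemma monomial_unit x y N : x != y -> monomial Rt (unit_exponent x y) N = Rt N x y.
Proof.
move=> xy; rewrite /monomial (bigD1 (x, y)) //= big1 => [|p /andP[_ p_xy]].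
  by rewrite /unit_exponent !eqxx /=; ring.
by rewrite unit_exponent_other.
Qed.

Lemma monomial_gt0 {m k} N : exponent Rt m k -> 0 < monomial Rt k N.
Proof.
move=> [k_bond _]; apply: (big_ind (fun x => 0 < x)) => [|u v|[x y] _ /=]; first lra.
  exact: Rmult_lt_0_compat.
case: (eqVneq (k x y) 0%nat) => [-> | /eqP k_xy]; first by rewrite pow_O; lra.
by apply: pow_lt; case: (k_bond x y k_xy) => _; apply.
Qed.

Local Notation poly := (seq (R * (E -> E -> nat))).

Definition peval (P : poly) N : R := \big[Rplus/0]_(t <- P) (t.1 * monomial Rt t.2 N).

Definition homog m (P : poly) : Prop :=
  forall t, List.In t P -> 0 < t.1 /\ exponent Rt m t.2.

Definition pmul (P Q : poly) : poly :=
  [seq (t.1 * u.1, add_exponent t.2 u.2) | t <- P, u <- Q].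

Definition pconst c : poly := [:: (c, zero_exponent)].

Lemma peval_cat P Q N : peval (P ++ Q) N = peval P N + peval Q N.
Proof. exact: big_cat. Qed.

Lemma peval_mul P Q N : peval (pmul P Q) N = peval P N * peval Q N.
Proof.
rewrite /peval /pmul big_allpairs_dep big_distrl /=; apply: eq_bigr => t _.
rewrite big_distrr /=; apply: eq_bigr => u _; rewrite monomialD; ring.
Qed.

Lemma peval_const c N : peval (pconst c) N = c.
Proof. by rewrite /peval big_seq1 monomial_zero Rmult_1_r. Qed.

Lemma homog_cat m P Q : homog m P -> homog m Q -> homog m (P ++ Q).
Proof. by move=> homP homQ t /List.in_app_iff [] ?; [apply: homP | apply: homQ]. Qed.

Lemma homog_mul m1 m2 P Q : homog m1 P -> homog m2 Q -> homog (m1 + m2) (pmul P Q).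
Proof.
elim: P => [|t P IHP] homtP homQ u //=.
move=> /List.in_app_iff[/List.in_map_iff[v [<- Qv]] | PQu]; last first.
  by apply: IHP => // w Pw; apply: homtP; right.
have [t1_gt0 t2_exp] := homtP t (or_introl erefl); have [v1_gt0 v2_exp] := homQ v Qv.
by split; [apply: Rmult_lt_0_compat | apply: exponentD].
Qed.

Lemma homog_const c : 0 < c -> homog 0 (pconst c).
Proof. by move=> c_gt0 t [<- | []]; split; last exact: exponent_zero. Qed.

Lemma peval_ge0 m P N : homog m P -> 0 <= peval P N.
Proof.
elim: P => [|t P IHP] homtP; first by rewrite /peval big_nil; lra.
have [t1_gt0 t2_exp] := homtP t (or_introl erefl).
have := monomial_gt0 N t2_exp; have : 0 <= peval P N by apply: IHP => u Pu; apply: homtP; right.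
by rewrite /peval big_cons; nra.
Qed.

Lemma peval_gt0 m t P N : homog m (t :: P) -> 0 < peval (t :: P) N.
Proof.
move=> homtP; have [t1_gt0 t2_exp] := homtP t (or_introl erefl).
have := monomial_gt0 N t2_exp; have : 0 <= peval P N.
  by apply: (@peval_ge0 m) => u Pu; apply: homtP; right.
by rewrite /peval big_cons; nra.
Qed.

End Polynomials.

Section Dominance.

Variables (E : finType) (Rt : nat -> E -> E -> R).
Hypothesis HA2 : assumptionA2 Rt.

Lemma monomial_ratio_total {m k k'} : (1 <= m)%nat ->
  exponent Rt m k -> exponent Rt m k' ->
  ratio_cv (monomial Rt k) (monomial Rt k') \/ ratio_cv (monomial Rt k') (monomial Rt k).
Proof.
move=> m_ge1 k_exp k'_exp; case: (classic (k = k')) => [<- | kk'].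
  by left; apply: ratio_cv_refl => N; apply: monomial_gt0 k_exp.
have [l cv_l] := proj2 (HA2 m_ge1) k k' k_exp k'_exp kk'.
by apply: ratio_cv_total cv_l => N; apply: monomial_gt0; eassumption.
Qed.

Lemma exists_dominant_exponent {m} (K : seq (E -> E -> nat)) : (1 <= m)%nat -> K <> [::] ->
  (forall k, List.In k K -> exponent Rt m k) ->
  exists2 d, List.In d K & forall k, List.In k K -> ratio_cv (monomial Rt k) (monomial Rt d).
Proof.
move=> m_ge1; elim: K => [// | k K IHK] _ K_exp.
have k_exp := K_exp k (or_introl erefl).
have mono_gt0 k' : List.In k' (k :: K) -> forall N, 0 < monomial Rt k' N.
  by move=> kK N; apply: monomial_gt0 (K_exp k' kK).
case: K IHK K_exp mono_gt0 => [_ _ mono_gt0 | k1 K IHK K_exp mono_gt0].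
  by exists k => [|_ [<- | []]]; [left | apply: ratio_cv_refl; apply: mono_gt0; left].
have [|d Kd d_dom] := IHK _ (fun k' kK => K_exp k' (or_intror kK)) => //.
have d_exp := K_exp d (or_intror Kd).
case: (monomial_ratio_total m_ge1 k_exp d_exp) => [k_le_d | d_le_k].
  by exists d => [|k' [<- // | ]]; [right | apply: d_dom].
have k_gt0 := mono_gt0 k (or_introl erefl).
exists k => [|k' [<- | kK]]; [by left | exact: ratio_cv_refl |].
exact: ratio_cv_trans (mono_gt0 d (or_intror Kd)) k_gt0 (d_dom _ kK) d_le_k.
Qed.

Lemma peval_ratio_cv {m d P} : exponent Rt m d -> homog Rt m P ->
  (forall t, List.In t P -> ratio_cv (monomial Rt t.2) (monomial Rt d)) ->
  exists L, [/\ Un_cv (fun N => peval Rt P N / monomial Rt d N) L, 0 <= L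
              & List.In d (map snd P) -> 0 < L].
Proof.
move=> d_exp; elim: P => [|t P IHP] homtP tP_dom.
  exists 0; split=> //; last lra.
  by apply: Un_cv_ext (Un_cv_const 0) => N; rewrite /peval big_nil /Rdiv Rmult_0_l.
have [t1_gt0 t2_exp] := homtP t (or_introl erefl).
have [|u Pu|L [cv_P L_ge0 L_gt0]] := IHP; [by move=> u Pu; apply: homtP; right | |].
  by apply: tP_dom; right.
have [Lt cv_t] := tP_dom t (or_introl erefl).
have Lt_ge0 : 0 <= Lt.
  apply: Un_cv_ge0 cv_t => N.
  by apply/Rlt_le/Rdiv_lt_0_compat; apply: monomial_gt0; eassumption.
exists (t.1 * Lt + L); split; last 1 first.
- move=> /= [t_d | /L_gt0]; last nra.
  suff -> : Lt = 1 by nra.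
  apply: UL_sequence cv_t _; apply: Un_cv_ext (Un_cv_const 1) => N.
  by rewrite t_d; field; apply/Rgt_not_eq/(monomial_gt0 N d_exp).
- apply: Un_cv_ext (CV_plus _ _ _ _ (CV_mult _ _ _ _ (Un_cv_const t.1) cv_t) cv_P) => N.
  by rewrite /peval big_cons /Rdiv; ring.
- nra.
Qed.

Lemma homog_atan_cv m P Q : (1 <= m)%nat -> homog Rt m P -> homog Rt m Q ->
  (forall N, 0 < peval Rt P N) -> (forall N, 0 < peval Rt Q N) ->
  exists l, Un_cv (fun N => atan (peval Rt P N / peval Rt Q N)) l.
Proof.
move=> m_ge1 homP homQ P_gt0 Q_gt0; have homPQ := homog_cat homP homQ.
have PQ_exp k : List.In k (map snd (P ++ Q)) -> exponent Rt m k.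
  by move=> /List.in_map_iff[t [<- PQt]]; case: (homPQ t PQt).
have [|d PQd d_dom] := exists_dominant_exponent m_ge1 _ PQ_exp.
  by case: P P_gt0 {homP homPQ PQ_exp} => // /(_ 0%nat); rewrite /peval big_nil; lra.
have d_exp := PQ_exp d PQd.
have dom t : List.In t (P ++ Q) -> ratio_cv (monomial Rt t.2) (monomial Rt d).
  by move=> PQt; apply/d_dom/List.in_map.
have [LP [cv_P _ LP_gt0]] :=
  peval_ratio_cv d_exp homP (fun t Pt => dom t (List.in_or_app _ _ _ (or_introl Pt))).
have [LQ [cv_Q _ LQ_gt0]] :=
  peval_ratio_cv d_exp homQ (fun t Qt => dom t (List.in_or_app _ _ _ (or_intror Qt))).
have d_gt0 N : 0 < monomial Rt d N := monomial_gt0 N d_exp.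
apply: (atan_ratio_converges P_gt0 Q_gt0 d_gt0 cv_P cv_Q).
by move: PQd; rewrite map_cat => /List.in_app_iff[/LP_gt0 | /LQ_gt0]; [left | right].
Qed.

End Dominance.

Section RationalFunctions.

Variables (E : finType) (Rt : nat -> E -> E -> R).

Definition pos_ratfun d (f : nat -> R) : Prop :=
  exists e P Q, [/\ homog Rt (d + e) P, homog Rt e Q, forall N, 0 < peval Rt Q N
                  & forall N, f N = peval Rt P N / peval Rt Q N].

Lemma pos_ratfun_ext d f g : (forall N, f N = g N) -> pos_ratfun d f -> pos_ratfun d g.
Proof.
move=> fg [e [P [Q [homP homQ Q_gt0 fPQ]]]].
by exists e, P, Q; split=> // N; rewrite -fg.
Qed.

Lemma pos_ratfun_ge0 d f N : pos_ratfun d f -> 0 <= f N.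
Proof.
move=> [e [P [Q [homP _ Q_gt0 ->]]]]; apply: Rmult_le_pos; first exact: peval_ge0 homP.
exact/Rlt_le/Rinv_0_lt_compat.
Qed.

Lemma pos_ratfun_dichotomy d f : pos_ratfun d f -> (forall N, f N = 0) \/ (forall N, 0 < f N).
Proof.
move=> [e [[|t P] [Q [homP _ Q_gt0 fPQ]]]]; [left | right] => N; rewrite fPQ.
  by rewrite /peval big_nil /Rdiv Rmult_0_l.
exact: Rdiv_lt_0_compat (peval_gt0 N homP) (Q_gt0 N).
Qed.

Lemma pos_ratfun_const c : 0 < c -> pos_ratfun 0 (fun _ => c).
Proof.
move=> c_gt0; exists 0%nat, (pconst E c), (pconst E 1).
by split=> [||N|N]; rewrite ?peval_const; try apply: homog_const; lra.
Qed.

Lemma pos_ratfun0 d : pos_ratfun d (fun _ => 0).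
Proof.
exists 0%nat, [::], (pconst E 1).
split=> [//||N|N]; rewrite ?peval_const; first (apply: homog_const; lra); first lra.
by rewrite /peval big_nil /Rdiv Rmult_0_l.
Qed.

Lemma pos_ratfunD d f g : pos_ratfun d f -> pos_ratfun d g -> pos_ratfun d (fun N => f N + g N).
Proof.
move=> [e1 [P1 [Q1 [homP1 homQ1 Q1_gt0 fPQ]]]] [e2 [P2 [Q2 [homP2 homQ2 Q2_gt0 gPQ]]]].
exists (e1 + e2)%nat, (pmul P1 Q2 ++ pmul P2 Q1), (pmul Q1 Q2); split=> [||N|N].
- apply: homog_cat.
    by rewrite (_ : (d + (e1 + e2) = d + e1 + e2)%nat); [apply: homog_mul | lia].
  by rewrite (_ : (d + (e1 + e2) = d + e2 + e1)%nat); [apply: homog_mul | lia].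
- exact: homog_mul.
- by rewrite peval_mul; apply: Rmult_lt_0_compat.
- rewrite peval_cat !peval_mul fPQ gPQ; field.
  by split; apply: Rgt_not_eq.
Qed.

Lemma pos_ratfunM d1 d2 f g :
  pos_ratfun d1 f -> pos_ratfun d2 g -> pos_ratfun (d1 + d2) (fun N => f N * g N).
Proof.
move=> [e1 [P1 [Q1 [homP1 homQ1 Q1_gt0 fPQ]]]] [e2 [P2 [Q2 [homP2 homQ2 Q2_gt0 gPQ]]]].
exists (e1 + e2)%nat, (pmul P1 P2), (pmul Q1 Q2); split=> [||N|N].
- by rewrite (_ : (d1 + d2 + (e1 + e2) = d1 + e1 + (d2 + e2))%nat); [apply: homog_mul | lia].
- exact: homog_mul.
- by rewrite peval_mul; apply: Rmult_lt_0_compat.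
- by rewrite !peval_mul fPQ gPQ; field; split; apply: Rgt_not_eq.
Qed.

Lemma pos_ratfun_div d d2 f g : pos_ratfun (d + d2) f -> pos_ratfun d2 g ->
  (forall N, 0 < g N) -> pos_ratfun d (fun N => f N / g N).
Proof.
move=> [e1 [P1 [Q1 [homP1 homQ1 Q1_gt0 fPQ]]]].
move=> [e2 [P2 [Q2 [homP2 homQ2 Q2_gt0 gPQ]]]] g_gt0.
have P2_gt0 N : 0 < peval Rt P2 N by apply: ratio_num_gt0 (Q2_gt0 N) _; rewrite -gPQ.
exists (d2 + e1 + e2)%nat, (pmul P1 Q2), (pmul Q1 P2); split=> [||N|N].
- by rewrite (_ : (d + (d2 + e1 + e2) = d + d2 + e1 + e2)%nat); [apply: homog_mul | lia].
- by rewrite (_ : (d2 + e1 + e2 = e1 + (d2 + e2))%nat); [apply: homog_mul | lia].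
- by rewrite peval_mul; apply: Rmult_lt_0_compat.
- by rewrite !peval_mul fPQ gPQ; field; repeat split; apply: Rgt_not_eq.
Qed.

Lemma pos_ratfun_sum d (I : Type) (r : seq I) (P : pred I) (F : I -> nat -> R) :
  (forall i, P i -> pos_ratfun d (F i)) ->
  pos_ratfun d (fun N => \big[Rplus/0]_(i <- r | P i) F i N).
Proof.
move=> F_rat; elim: r => [|i r IHr].
  by apply: pos_ratfun_ext (pos_ratfun0 d) => N; rewrite big_nil.
case Pi: (P i); last by apply: pos_ratfun_ext IHr => N; rewrite big_cons Pi.
by apply: pos_ratfun_ext (pos_ratfunD (F_rat i Pi) IHr) => N; rewrite big_cons Pi.
Qed.

Lemma pos_ratfun_atan_cv d f g : assumptionA2 Rt -> (1 <= d)%nat ->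
  pos_ratfun d f -> pos_ratfun d g -> (forall N, 0 < f N) -> (forall N, 0 < g N) ->
  exists l, Un_cv (fun N => atan (f N / g N)) l.
Proof.
move=> HA2 d_ge1 [e1 [P1 [Q1 [homP1 homQ1 Q1_gt0 fPQ]]]].
move=> [e2 [P2 [Q2 [homP2 homQ2 Q2_gt0 gPQ]]]] f_gt0 g_gt0.
have P1_gt0 N : 0 < peval Rt P1 N by apply: ratio_num_gt0 (Q1_gt0 N) _; rewrite -fPQ.
have P2_gt0 N : 0 < peval Rt P2 N by apply: ratio_num_gt0 (Q2_gt0 N) _; rewrite -gPQ.
have [|||N|N|l cv_l] := @homog_atan_cv _ Rt HA2 (d + e1 + e2) (pmul P1 Q2) (pmul Q1 P2).
- by apply: leq_trans d_ge1 _; rewrite -addnA leq_addr.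
- exact: homog_mul.
- by rewrite (_ : (d + e1 + e2 = e1 + (d + e2))%nat); [apply: homog_mul | lia].
- by rewrite peval_mul; apply: Rmult_lt_0_compat.
- by rewrite peval_mul; apply: Rmult_lt_0_compat.
exists l; apply: Un_cv_ext cv_l => N.
by rewrite !peval_mul fPQ gPQ; congr atan; field; repeat split; apply: Rgt_not_eq.
Qed.

End RationalFunctions.

Section Elimination.

Variable E : finType.
Implicit Types (S : {set E}) (r : E -> E -> R) (nu : E -> R).

Definition balanced S r nu := forall y, y \in S ->
  \big[Rplus/0]_(x | (x \in S) && (x != y)) (nu x * r x y)
  = nu y * \big[Rplus/0]_(w | (w \in S) && (w != y)) r y w.

Definition escape_rate S r z := \big[Rplus/0]_(w | (w \in S) && (w != z)) r z w.

(* Rates of the chain watched on [S :\ z]: a jump [x -> z] is followed by the exit from [z]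
   to [y] with probability [r z y / escape_rate S r z]. *)
Definition trace_rates S r z : E -> E -> R :=
  fun x y => r x y + r x z * r z y / escape_rate S r z.

Definition extend_measure S r z nu : E -> R := fun x =>
  if x == z then \big[Rplus/0]_(w | (w \in S) && (w != z)) (nu w * r w z) / escape_rate S r z
  else nu x.

Lemma big_setD1_neq (F : E -> R) S y z : z \in S -> z != y ->
  \big[Rplus/0]_(x | (x \in S) && (x != y)) F x
  = F z + \big[Rplus/0]_(x | (x \in S :\ z) && (x != y)) F x.
Proof.
move=> Sz zy; rewrite (bigD1 z) /= ?Sz //; congr (_ + _).
by apply: eq_bigl => x; rewrite in_setD1; case: (x != z) (x \in S) (x != y) => [] [] [].
Qed.

Lemma big_setD1_neqC (F : E -> R) S y z : y \in S -> y != z ->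
  \big[Rplus/0]_(x | (x \in S) && (x != z)) F x
  = F y + \big[Rplus/0]_(x | (x \in S :\ z) && (x != y)) F x.
Proof.
move=> Sy yz; rewrite (big_setD1_neq _ Sy yz); congr (_ + _).
by apply: eq_bigl => x; rewrite !in_setD1; case: (x != z) (x \in S) (x != y) => [] [] [].
Qed.

Lemma escape_rate_eq0 S r z : (forall w, w \in S -> w != z -> 0 <= r z w) ->
  escape_rate S r z = 0 -> forall w, w \in S -> w != z -> r z w = 0.
Proof.
move=> r_ge0 esc0 w Sw wz; apply: Rle_antisym; last exact: r_ge0.
rewrite -esc0; apply: (sumR_ge_term (P := fun w => (w \in S) && (w != z))).
  by move=> x /andP[]; apply: r_ge0.
by rewrite Sw wz.
Qed.

Lemma balanced_point_mass S r z : z \in S ->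
  (forall w, w \in S -> w != z -> r z w = 0) ->
  balanced S r (fun x => if x == z then 1 else 0).
Proof.
move=> Sz z_abs y Sy /=; case: (eqVneq y z) => [-> | yz].
  rewrite Rmult_1_l !big1 // => x /andP[Sx xz]; first exact: z_abs.
  by rewrite (negbTE xz) Rmult_0_l.
rewrite Rmult_0_l (big_setD1_neq _ Sz) 1?eq_sym // eqxx z_abs // Rmult_0_r.
by rewrite big1 ?Rplus_0_l // => x /andP[]; rewrite in_setD1 => /andP[/negbTE -> _] _; ring.
Qed.

Lemma balanced_extend S r z nu : z \in S -> escape_rate S r z <> 0 ->
  balanced (S :\ z) (trace_rates S r z) nu -> balanced S r (extend_measure S r z nu).
Proof.
move=> Sz lam_neq0 bal y Sy; rewrite /extend_measure.
set lam := escape_rate S r z.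
case: (eqVneq y z) => [-> | yz].
  rewrite (eq_bigr (fun x => nu x * r x z)) => [|x /andP[_ /negbTE ->] //].
  by rewrite -/(escape_rate S r z) -/lam; field.
have S'y : y \in S :\ z by rewrite in_setD1 yz.
have zy : z != y by rewrite eq_sym.
have := bal y S'y; rewrite /trace_rates -/lam.
rewrite !(big_setD1_neq _ Sz zy) eqxx (big_setD1_neqC _ Sy yz).
move=> bal_y.
rewrite [X in _ + X = _](eq_bigr (fun x => nu x * r x y)); last first.
  by move=> x /andP[]; rewrite in_setD1 => /andP[/negbTE -> _].
rewrite (eq_bigr (fun x => nu x * r x y + nu x * r x z * (r z y / lam))) in bal_y; last first.
  by move=> x _; rewrite /Rdiv; ring.
rewrite [X in _ = _ * X](eq_bigr (fun w => r y w + r z w * (r y z / lam))) in bal_y; last first.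
  by move=> w _; rewrite /Rdiv; ring.
rewrite !big_split -!big_distrl /= in bal_y.
have lamE : lam = r z y + \big[Rplus/0]_(w | (w \in S :\ z) && (w != y)) r z w.
  exact: big_setD1_neqC.
move: bal_y lamE; set B := \big[Rplus/0]_(x | _) (nu x * r x y).
set A' := \big[Rplus/0]_(x | _) (nu x * r x z); set C := \big[Rplus/0]_(w | _) r y w.
set L' := \big[Rplus/0]_(w | _) r z w => bal_y lamE.
have -> : B = nu y * (C + L' * (r y z / lam)) - A' * (r z y / lam) by lra.
have -> : L' = lam - r z y by lra.
by field.
Qed.

End Elimination.

Section RationalInvariantMeasure.

Variables (E : finType) (Rt : nat -> E -> E -> R).
Implicit Types (S : {set E}) (r : nat -> E -> E -> R).

Definition ratfun_rates S r :=
  forall x y, x \in S -> y \in S -> x != y -> pos_ratfun Rt 1 (fun N => r N x y).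

Lemma escape_rate_ratfun S r z :
  ratfun_rates S r -> z \in S -> pos_ratfun Rt 1 (fun N => escape_rate S (r N) z).
Proof.
move=> r_rat Sz; apply: pos_ratfun_sum => w /andP[Sw wz].
by apply: r_rat; rewrite // eq_sym.
Qed.

Lemma trace_rates_ratfun S r z : ratfun_rates S r -> z \in S ->
  (forall N, 0 < escape_rate S (r N) z) ->
  ratfun_rates (S :\ z) (fun N => trace_rates S (r N) z).
Proof.
move=> r_rat Sz esc_gt0 x y; rewrite !in_setD1 => /andP[xz Sx] /andP[yz Sy] xy.
apply: pos_ratfunD (r_rat x y Sx Sy xy) _.
apply: (pos_ratfun_div (d2 := 1)) (escape_rate_ratfun r_rat Sz) esc_gt0.
by apply: pos_ratfunM; apply: r_rat; rewrite // eq_sym.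
Qed.

Lemma extend_measure_ratfun S r z (nu : nat -> E -> R) x :
  ratfun_rates S r -> z \in S -> (forall N, 0 < escape_rate S (r N) z) ->
  (forall x, x \in S :\ z -> pos_ratfun Rt 0 (fun N => nu N x)) -> x \in S ->
  pos_ratfun Rt 0 (fun N => extend_measure S (r N) z (nu N) x).
Proof.
move=> r_rat Sz esc_gt0 nu_rat Sx; rewrite /extend_measure.
case: (eqVneq x z) => [_ | xz]; last by apply: nu_rat; rewrite in_setD1 xz.
apply: (pos_ratfun_div (d2 := 1)) (escape_rate_ratfun r_rat Sz) esc_gt0.
apply: pos_ratfun_sum => w /andP[Sw wz]; apply: (pos_ratfunM (d1 := 0)); last exact: r_rat.
by apply: nu_rat; rewrite in_setD1 wz.
Qed.

Lemma exists_ratfun_balanced S r : S != set0 -> ratfun_rates S r ->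
  exists nu : nat -> E -> R,
    [/\ forall x, x \in S -> pos_ratfun Rt 0 (fun N => nu N x),
        exists2 x, x \in S & (forall N, 0 < nu N x)
      & forall N, balanced S (r N) (nu N)].
Proof.
move Sn : #|S| => n; elim: n S Sn r => [|n IHn] S Sn r S_neq0 r_rat.
  by move/eqP: Sn; rewrite cards_eq0 (negbTE S_neq0).
have [z Sz] := set0Pn _ S_neq0.
(* The escape rate from [z] vanishes either for every [N], when [z] is absorbing and carries
   an invariant point mass, or for no [N], when [z] can be eliminated. *)
case: (pos_ratfun_dichotomy (escape_rate_ratfun r_rat Sz)) => [esc0 | esc_gt0].
  exists (fun _ x => if x == z then 1 else 0); split=> [x _||N]; last first.
  - apply: balanced_point_mass => //; apply: escape_rate_eq0 (esc0 N) => w Sw wz.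
    by apply: pos_ratfun_ge0 (r_rat z w Sz Sw _); rewrite eq_sym.
  - by exists z => // N; rewrite eqxx; lra.
  - by case: (x == z); [apply: pos_ratfun_const; lra | apply: pos_ratfun0].
have S'_neq0 : S :\ z != set0.
  apply/negP => /eqP S'0; have := esc_gt0 0%nat; rewrite /escape_rate big_pred0; first lra.
  by move=> w; rewrite andbC -in_setD1 S'0 in_set0.
have S'n : #|S :\ z| = n by move: Sn; rewrite (cardsD1 z) Sz => -[].
have [nu' [nu'_rat [x0 S'x0 nu'x0_gt0] nu'_bal]] :=
  IHn _ S'n _ S'_neq0 (trace_rates_ratfun r_rat Sz esc_gt0).
exists (fun N => extend_measure S (r N) z (nu' N)); split=> [x Sx||N].
- exact: extend_measure_ratfun.
- move: S'x0; rewrite in_setD1 => /andP[x0z Sx0]; exists x0 => // N.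
  by rewrite /extend_measure (negbTE x0z).
- by apply: balanced_extend => //; apply: Rgt_not_eq.
Qed.

End RationalInvariantMeasure.

Lemma invariant_prob_pred_eq0 (E : finType) (r : E -> E -> R) (mu : E -> R) a b :
  rates r -> invariant_prob r mu -> a <> b -> 0 < r a b -> mu b = 0 -> mu a = 0.
Proof.
move=> r_ge0 [mu_ge0 [_ mu_bal]] ab rab mub0.
have : mu a * r a b <= 0.
  have := mu_bal b; rewrite mub0 Rmult_0_l => <-.
  apply: (sumR_ge_term (P := fun x => x != b)) => [x /eqP xb|]; last exact/eqP.
  by apply: Rmult_le_pos; [apply: mu_ge0 | apply: r_ge0].
by have := mu_ge0 a; nra.
Qed.

Lemma invariant_prob_gt0 (E : finType) (r : E -> E -> R) (mu : E -> R) :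
  rates r -> irreducible r -> invariant_prob r mu -> forall x, 0 < mu x.
Proof.
move=> r_ge0 r_irr mu_inv x; have [mu_ge0 [mu_sum _]] := mu_inv.
case: (Rle_lt_dec (mu x) 0) => // mux_le0.
suff mu0 y : mu y = 0 by move: mu_sum; rewrite big1 => [|y _]; [lra | apply: mu0].
elim: (r_irr y x) (Rle_antisym _ _ mux_le0 (mu_ge0 x)).
- by move=> a b [ab rab]; apply: invariant_prob_pred_eq0 r_ge0 mu_inv ab rab.
- by [].
by move=> a b c _ IHab _ IHbc muc0; apply/IHab/IHbc.
Qed.

Lemma invariant_prob_normalize (E : finType) (r : E -> E -> R) (nu : E -> R) :
  (forall x, 0 <= nu x) -> 0 < \big[Rplus/0]_(x : E) nu x -> balanced [set: E] r nu ->
  invariant_prob r (fun x => nu x / \big[Rplus/0]_(x : E) nu x).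
Proof.
set s := \big[Rplus/0]_(x : E) nu x => nu_ge0 s_gt0 nu_bal; rewrite /Rdiv; split; [|split].
- by move=> x; apply: Rmult_le_pos (nu_ge0 x) (Rlt_le _ _ (Rinv_0_lt_compat _ s_gt0)).
- by rewrite -big_distrl -/s /=; field; apply: Rgt_not_eq.
move=> y; have := nu_bal y (in_setT y).
rewrite (eq_bigl (fun x => x != y)) => [|x]; last by rewrite in_setT.
rewrite [X in _ = _ * X -> _](eq_bigl (fun x => x != y)) => [|x]; last by rewrite in_setT.
move=> bal_y; rewrite (eq_bigr (fun x => nu x * r x y * / s)) => [|x _]; last by ring.
by rewrite -big_distrl /= bal_y [RHS]Rmult_assoc [/ s * _]Rmult_comm -Rmult_assoc.
Qed.

Lemma rate_ratfun (E : finType) (Rt : nat -> E -> E -> R) x y :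
  assumptionA1 Rt -> x != y -> pos_ratfun Rt 1 (fun N => Rt N x y).
Proof.
move=> HA1 xy; case: (HA1 x y (elimN eqP xy)) => [Rxy0 | Rxy_gt0].
  by apply: pos_ratfun_ext (pos_ratfun0 Rt 1) => N; rewrite Rxy0.
exists 0%nat, [:: (1, unit_exponent x y)], (pconst E 1); split=> [||N|N].
- move=> t [<- | []]; split; first by rewrite /=; lra.
  by apply: exponent_unit; split; first exact/eqP.
- by apply: homog_const; lra.
- by rewrite peval_const; lra.
- by rewrite peval_const /peval big_seq1 monomial_unit //= Rmult_1_l Rdiv_1_r.
Qed.

Lemma invariant_prob_ratfun (E : finType) (Rt : nat -> E -> E -> R) (mu : nat -> E -> R) :
  assumptionA1 Rt -> (forall N, invariant_prob (Rt N) (mu N)) ->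
  (forall N nu, invariant_prob (Rt N) nu -> nu = mu N) ->
  forall x, pos_ratfun Rt 0 (fun N => mu N x).
Proof.
move=> HA1 mu_inv mu_uniq.
have E_neq0 : [set: E] != set0.
  apply/set0Pn; case: (pickP (@predT E)) => [x _ | E0]; first by exists x; rewrite in_setT.
  by have := proj1 (proj2 (mu_inv 0%nat)); rewrite big1 // => [|y]; [lra | have := E0 y].
have [nu [nu_rat [x0 _ nux0_gt0] nu_bal]] :=
  exists_ratfun_balanced E_neq0 (fun x y _ _ => rate_ratfun HA1 (x := x) (y := y)).
have nu_ge0 N x : 0 <= nu N x by apply: pos_ratfun_ge0 (nu_rat x (in_setT x)).
pose s N := \big[Rplus/0]_(x : E) nu N x.
have s_rat : pos_ratfun Rt 0 s by apply: pos_ratfun_sum => x _; apply: nu_rat (in_setT x).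
have s_gt0 N : 0 < s N.
  by apply: Rlt_le_trans (nux0_gt0 N) (sumR_ge_term (P := xpredT) _ _) => // y _.
have muE N : mu N = fun x => nu N x / s N.
  by symmetry; apply: mu_uniq; apply: invariant_prob_normalize (nu_ge0 N) (s_gt0 N) _.
move=> x; have := pos_ratfun_div (d := 0) (nu_rat x (in_setT x)) s_rat s_gt0.
by apply: pos_ratfun_ext => N; rewrite muE.
Qed.

Theorem corollary3p5 (E : finType) (Rt : nat -> E -> E -> R) (mu : nat -> E -> R)
  (Hrates : forall N, rates (Rt N))
  (Hirr : forall N, irreducible (Rt N))
  (Hinv : forall N, invariant_prob (Rt N) (mu N))
  (Huniq : forall N (nu : E -> R), invariant_prob (Rt N) nu -> nu = mu N)
  (HA1 : assumptionA1 Rt) (HA2 : assumptionA2 Rt) :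
  ordered_family (sym_bond Rt) (cs Rt mu).
Proof.
have mu_gt0 N x : 0 < mu N x := invariant_prob_gt0 (Hrates N) (Hirr N) (Hinv N) x.
have mu_rat := invariant_prob_ratfun HA1 Hinv Huniq.
have cs_gt0 p N : sym_bond Rt p -> 0 < cs Rt mu p N.
  move=> [p12 p_bond]; rewrite /cs.
  have := Hrates N _ _ p12; have := Hrates N _ _ (nesym p12).
  have := mu_gt0 N p.1; have := mu_gt0 N p.2.
  by case: p_bond => -[_ /(_ N)]; nra.
have cs_rat p : sym_bond Rt p -> pos_ratfun Rt 1 (cs Rt mu p).
  move=> [/eqP p12 _]; rewrite /cs; apply: (pos_ratfunM (d1 := 0)).
    by apply: pos_ratfun_const; lra.
  apply: pos_ratfunD; apply: (pos_ratfunM (d1 := 0)) (mu_rat _) (rate_ratfun HA1 _) => //.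
  by rewrite eq_sym.
split=> [p p_sym N | p q p_sym q_sym _]; first exact: cs_gt0.
apply: pos_ratfun_atan_cv HA2 _ (cs_rat p p_sym) (cs_rat q q_sym) _ _ => // N.
- exact: cs_gt0.
- exact: cs_gt0.
Qed.
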